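(* Let $S\subset\mathbf R^4$ be a surface and let $p\in S$ satisfy $\Delta(p)=0$ and $K(p)=0$. Then $p$ is a critical point of $\Delta$ (so the discriminant curve $\Delta=0$ is singular at $p$) and this singularity is non-Morse, i.e. the Hessian determinant of $\Delta$ at $p$ vanishes.
   Context: With respect to a smooth adapted orthonormal moving frame $e_1,e_2$ (tangent), $e_3,e_4$ (normal), the second fundamental form is $\mathbf{II}(u)=(au_1^2+2bu_1u_2+cu_2^2)e_3+(eu_1^2+2fu_1u_2+gu_2^2)e_4$ for $u=u_1e_1+u_2e_2$; $a,\dots,g$ are smooth functions on $S$. The Gaussian curvature is $K=(ac-b^2)+(eg-f^2)$, and $\Delta=(ac-b^2)(eg-f^2)-\tfrac14(ag+ce-2bf)^2$, regarded as a smooth function on $S$ (in local coordinates); the discriminant curve is $\{\Delta=0\}$. *)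

From Stdlib Require Import Reals List.
From Coquelicot Require Import Coquelicot.
Open Scope R_scope.

(* Functions on a coordinate chart, written as functions of two real
   variables (u, v).  Partial derivative: i = false is d/du, i = true is d/dv. *)
Definition pd (i : bool) (F : R -> R -> R) : R -> R -> R :=
  if i then fun x y => Derive (fun t => F x t) y
  else fun x y => Derive (fun t => F t y) x.

Definition iter_pd (l : list bool) (F : R -> R -> R) : R -> R -> R :=
  fold_right pd F l.

Definition smooth2d (F : R -> R -> R) : Prop :=
  forall (l : list bool) (x y : R),
    continuous (fun z : R * R => iter_pd l F (fst z) (snd z)) (x, y) /\
    ex_derive (fun t => iter_pd l F t y) x /\
    ex_derive (fun t => iter_pd l F x t) y.

Definition Kcurv (a b c e f g : R -> R -> R) : R -> R -> R :=
  fun x y => (a x y * c x y - (b x y)^2) + (e x y * g x y - (f x y)^2).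

Definition Delta2 (a b c e f g : R -> R -> R) : R -> R -> R :=
  fun x y => (a x y * c x y - (b x y)^2) * (e x y * g x y - (f x y)^2)
             - / 4 * (a x y * g x y + c x y * e x y - 2 * b x y * f x y)^2.

Definition hess_det (F : R -> R -> R) (x y : R) : R :=
  pd false (pd false F) x y * pd true (pd true F) x y
  - pd true (pd false F) x y * pd false (pd true F) x y.

(* Write q1 = (a,b,c), q2 = (e,f,g) and let [pol] be the polarisation of the
   determinant, so that det (s q1 + t q2) = (F s^2 + 2 H s t + G t^2) / 2 with
   F = pol(q1,q1), G = pol(q2,q2), H = pol(q1,q2).  Then K = (F + G) / 2 and
   Delta = (F G - H^2) / 4, so Delta = K = 0 forces F = G = H = 0: the whole
   pencil is degenerate, which makes q1 and q2 multiples of a common square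
   l^2.  Since F, G, H vanish at p, so does the gradient of Delta, and its
   Hessian is the quadratic form v |-> (dF(v) dG(v) - dH(v)^2) / 2.  For
   q1 = lambda l^2 and q2 = mu l^2 this form is minus half the square of a
   linear form, hence has zero determinant. *)

From Stdlib Require Import Reals List Lra Psatz FunctionalExtensionality.
From Coquelicot Require Import Coquelicot.
Open Scope R_scope.

Definition ex_pd (i : bool) (F : R -> R -> R) (x y : R) : Prop :=
  if i then ex_derive (fun t => F x t) y else ex_derive (fun t => F t y) x.

Definition twice_pd (F : R -> R -> R) : Prop :=
  forall i j x y, ex_pd i F x y /\ ex_pd j (pd i F) x y.

Lemma smooth2d_twice_pd (F : R -> R -> R) : smooth2d F -> twice_pd F.
Proof.
  intros HF i j x y.
  destruct (HF nil x y) as [_ H0], (HF (i :: nil) x y) as [_ H1].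
  split; [destruct i | destruct j]; simpl in *; tauto.
Qed.

Lemma twice_pd_ex_pd (F : R -> R -> R) i x y : twice_pd F -> ex_pd i F x y.
Proof. intros HF; exact (proj1 (HF i i x y)). Qed.

Definition pol (a b c e f g : R) : R := a * g + c * e - 2 * b * f.

(* The normalisation of (p, r) makes the line of a nonzero rank-one form unique. *)
Lemma rank_one_of_pol_zero (a b c : R) :
  pol a b c a b c = 0 ->
  exists l p r, (p = 1 \/ (p = 0 /\ r = 1)) /\
    a = l * p ^ 2 /\ b = l * p * r /\ c = l * r ^ 2.
Proof.
  unfold pol; intros Habc.
  destruct (Req_dec a 0) as [Ha | Ha].
  - exists c, 0, 1. subst a. assert (b = 0) by nra. subst b. split; [right|]; lra.
  - exists a, 1, (b / a). split; [now left|].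
    split; [ring|split; [field; exact Ha|]].
    apply (Rmult_eq_reg_l a); [|exact Ha]. field_simplify; [nra|exact Ha].
Qed.

Lemma common_square_of_degenerate_pencil (a b c e f g : R) :
  pol a b c a b c = 0 -> pol e f g e f g = 0 -> pol a b c e f g = 0 ->
  exists l m p r,
    a = l * p ^ 2 /\ b = l * p * r /\ c = l * r ^ 2 /\
    e = m * p ^ 2 /\ f = m * p * r /\ g = m * r ^ 2.
Proof.
  intros H1 H2 H12.
  destruct (rank_one_of_pol_zero a b c H1) as (l & p & r & Hpr & -> & -> & ->).
  destruct (rank_one_of_pol_zero e f g H2) as (m & p' & r' & Hpr' & -> & -> & ->).
  assert (Hmix : l * m * (p * r' - r * p') ^ 2 = 0) by (rewrite <- H12; unfold pol; ring).
  destruct (Rmult_integral _ _ Hmix) as [Hlm | Hline].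
  - destruct (Rmult_integral _ _ Hlm) as [-> | ->].
    + exists 0, m, p', r'. repeat split; ring.
    + exists l, 0, p, r. repeat split; ring.
  - assert (p = p' /\ r = r') as [<- <-] by (destruct Hpr as [-> | [-> ->]], Hpr' as [-> | [-> ->]]; nra).
    exists l, m, p, r. repeat split; ring.
Qed.

Definition polf (a b c e f g : R -> R -> R) : R -> R -> R :=
  fun x y => pol (a x y) (b x y) (c x y) (e x y) (f x y) (g x y).

Section Polar.
Variables a b c e f g : R -> R -> R.

Lemma pd_polf i x y :
  ex_pd i a x y -> ex_pd i b x y -> ex_pd i c x y ->
  ex_pd i e x y -> ex_pd i f x y -> ex_pd i g x y ->
  pd i (polf a b c e f g) x y =
  polf (pd i a) (pd i b) (pd i c) e f g x y + polf a b c (pd i e) (pd i f) (pd i g) x y.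
Proof.
  intros. unfold polf, pol.
  destruct i; simpl in *; apply is_derive_unique; auto_derive; try tauto; ring.
Qed.

Hypotheses (Ha : twice_pd a) (Hb : twice_pd b) (Hc : twice_pd c)
  (He : twice_pd e) (Hf : twice_pd f) (Hg : twice_pd g).

Lemma twice_pd_polf : twice_pd (polf a b c e f g).
Proof.
  intros i j x y.
  destruct (Ha i j x y), (Hb i j x y), (Hc i j x y), (He i j x y), (Hf i j x y), (Hg i j x y).
  destruct (Ha j i x y), (Hb j i x y), (Hc j i x y), (He j i x y), (Hf j i x y), (Hg j i x y).
  split.
  - unfold ex_pd, polf, pol in *; destruct i; auto_derive; tauto.
  - replace (pd i (polf a b c e f g)) with
      (fun x y => polf (pd i a) (pd i b) (pd i c) e f g x y + polf a b c (pd i e) (pd i f) (pd i g) x y).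
    + unfold ex_pd, polf, pol in *; destruct j; auto_derive; tauto.
    + apply functional_extensionality; intro x'; apply functional_extensionality; intro y'.
      symmetry; apply pd_polf; apply twice_pd_ex_pd; assumption.
Qed.
End Polar.

Definition disc (F G H : R -> R -> R) : R -> R -> R :=
  fun x y => / 4 * (F x y * G x y - H x y ^ 2).

Lemma pd_disc (F G H : R -> R -> R) i x y :
  ex_pd i F x y -> ex_pd i G x y -> ex_pd i H x y ->
  pd i (disc F G H) x y =
  / 4 * (pd i F x y * G x y + F x y * pd i G x y - 2 * H x y * pd i H x y).
Proof.
  intros. unfold disc.
  destruct i; simpl in *; apply is_derive_unique; auto_derive; try tauto; ring.
Qed.

Section CommonZero.
Variables (F G H : R -> R -> R) (x0 y0 : R).
Hypotheses (HF : twice_pd F) (HG : twice_pd G) (HH : twice_pd H).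
Hypotheses (F0 : F x0 y0 = 0) (G0 : G x0 y0 = 0) (H0 : H x0 y0 = 0).

Lemma pd_disc_common_zero i : pd i (disc F G H) x0 y0 = 0.
Proof.
  rewrite pd_disc by (apply twice_pd_ex_pd; assumption).
  rewrite F0, G0, H0; ring.
Qed.

Lemma pd2_disc_common_zero i j :
  pd j (pd i (disc F G H)) x0 y0 =
  / 4 * (pd i F x0 y0 * pd j G x0 y0 + pd j F x0 y0 * pd i G x0 y0
         - 2 * pd i H x0 y0 * pd j H x0 y0).
Proof.
  replace (pd i (disc F G H)) with (fun x y =>
    / 4 * (pd i F x y * G x y + F x y * pd i G x y - 2 * H x y * pd i H x y)).
  2:{ apply functional_extensionality; intro x; apply functional_extensionality; intro y.
      symmetry; apply pd_disc; apply twice_pd_ex_pd; assumption. }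
  destruct (HF i j x0 y0), (HG i j x0 y0), (HH i j x0 y0).
  destruct (HF j j x0 y0), (HG j j x0 y0), (HH j j x0 y0).
  destruct j; simpl in *; apply is_derive_unique; auto_derive; try tauto;
    rewrite F0, G0, H0; ring.
Qed.
End CommonZero.

Lemma disc_curv_zero (F G H : R) :
  / 4 * (F * G - H ^ 2) = 0 -> / 2 * (F + G) = 0 -> F = 0 /\ G = 0 /\ H = 0.
Proof. intros HD HK. assert (G = - F) by lra. subst G. nra. Qed.

Section Pencil.
Variables a b c e f g : R -> R -> R.

Lemma Delta2_disc :
  Delta2 a b c e f g = disc (polf a b c a b c) (polf e f g e f g) (polf a b c e f g).
Proof.
  apply functional_extensionality; intro x; apply functional_extensionality; intro y.
  unfold Delta2, disc, polf, pol; field.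
Qed.

Lemma Kcurv_polf x y :
  Kcurv a b c e f g x y = / 2 * (polf a b c a b c x y + polf e f g e f g x y).
Proof. unfold Kcurv, polf, pol; field. Qed.

Hypotheses (Ha : twice_pd a) (Hb : twice_pd b) (Hc : twice_pd c)
  (He : twice_pd e) (Hf : twice_pd f) (Hg : twice_pd g).
Variables x0 y0 : R.
Hypotheses (H11 : polf a b c a b c x0 y0 = 0) (H22 : polf e f g e f g x0 y0 = 0)
  (H12 : polf a b c e f g x0 y0 = 0).

Lemma hess_det_disc_degenerate_pencil :
  hess_det (disc (polf a b c a b c) (polf e f g e f g) (polf a b c e f g)) x0 y0 = 0.
Proof.
  unfold hess_det.
  rewrite !pd2_disc_common_zero by (apply twice_pd_polf || assumption; assumption).
  rewrite !pd_polf by (apply twice_pd_ex_pd; assumption).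
  destruct (common_square_of_degenerate_pencil _ _ _ _ _ _ H11 H22 H12)
    as (l & m & p & r & Ea & Eb & Ec & Ee & Ef & Eg).
  unfold polf, pol. rewrite Ea, Eb, Ec, Ee, Ef, Eg. ring.
Qed.
End Pencil.

Theorem mainTheorem6 (a b c e f g : R -> R -> R) (x0 y0 : R) :
  smooth2d a -> smooth2d b -> smooth2d c -> smooth2d e -> smooth2d f -> smooth2d g ->
  Delta2 a b c e f g x0 y0 = 0 ->
  Kcurv a b c e f g x0 y0 = 0 ->
  (pd false (Delta2 a b c e f g) x0 y0 = 0 /\
   pd true (Delta2 a b c e f g) x0 y0 = 0) /\
  hess_det (Delta2 a b c e f g) x0 y0 = 0.
Proof.
  intros Ha Hb Hc He Hf Hg HD HK.
  apply smooth2d_twice_pd in Ha, Hb, Hc, He, Hf, Hg.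
  rewrite Delta2_disc in HD |- *. rewrite Kcurv_polf in HK.
  destruct (disc_curv_zero _ _ _ HD HK) as (H11 & H22 & H12).
  split; [split; apply pd_disc_common_zero; auto using twice_pd_polf |].
  now apply hess_det_disc_degenerate_pencil.
Qed.
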